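(* Let $p$ be a prime, $n\ge1$, and $a_1,\dots,a_n\in\mathbb{Z}$. Define $\mathfrak{b}':\{0,\dots,p-1\}^n\to\mathbb{Z}$ by $\mathfrak{b}'(x_1,\dots,x_n)=\sum_{i=1}^na_ix_i$, and let $r:\mathbb{Z}\to\{0,\dots,p^n-1\}$ be reduction modulo $p^n$. Then $r\circ\mathfrak{b}':\{0,\dots,p-1\}^n\to\{0,\dots,p^n-1\}$ is bijective if and only if, after relabelling the indices $1,\dots,n$ if necessary, $v(a_i)=n-i$ for $1\le i\le n$, where $v$ denotes the $p$-adic valuation. *)

From mathcomp Require Import all_boot all_order all_algebra all_fingroup.
Unset Printing Implicit Defensive.
Import GRing.Theory Num.Theory.
Local Open Scope ring_scope.

Definition bprime (p n : nat) (a : 'I_n -> int) (x : {ffun 'I_n -> 'I_p}) : int :=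
  \sum_(i < n) a i * (x i : nat)%:Z.

Arguments bprime p {n} a x.

Definition redmod (N : nat) (z : int) : nat := `|(z %% N%:Z)%Z|%N.

(* p-adic valuation on Z, with v(0) = infinity represented by None *)
Definition padicv (p : nat) (z : int) : option nat :=
  if z == 0 then None else Some (logn p `|z|%N).

From mathcomp Require Import all_boot all_order all_algebra all_fingroup all_field.
From mathcomp Require Import zify.

(* If [r \o b'] is bijective and [k < n], take a primitive [p^(k+1)]-th root of
   unity [z].  Summing [z ^ b'(x)] over all [x] gives the sum of all [p^n] powers
   of [z], which vanishes; but the sum factors as [\prod_i \sum_(t < p) (z ^ a_i) ^ t],
   so some [z ^ a_i] is a nontrivial [p]-th root of unity, i.e. [v(a_i) = k].
   Every [k < n] is thus a valuation, and the [a_i] can be relabelled.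
   Conversely, if [v(a_(s i)) = n - 1 - i] and [b'(x) = b'(y) mod p^n], then the
   differences [x_(s i) - y_(s i)], which lie in [(-p, p)], vanish one at a time,
   starting from the coefficient of valuation [0], by comparing modulo
   [p, p^2, ..., p^n]; injectivity then gives bijectivity by counting. *)

Import GRing.Theory Num.Theory.
Local Open Scope ring_scope.

Section Redmod.

Context {N : nat}.
Hypothesis N_gt0 : (0 < N)%N.

Lemma redmodE (z : int) : (redmod N z)%:Z = (z %% N)%Z.
Proof. by rewrite /redmod gez0_abs ?modz_ge0 // eqz_nat -lt0n. Qed.

Lemma redmod_lt (z : int) : (redmod N z < N)%N.
Proof. by rewrite -ltz_nat redmodE ltz_pmod. Qed.

End Redmod.

Section RootOfUnity.

Context {R : unitRingType} {N : nat} {z : R}.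
Hypotheses (N_gt0 : (0 < N)%N) (zN1 : z ^+ N = 1).

Lemma root_of_unity_unit : z \is a GRing.unit.
Proof.
apply/unitrP; exists (z ^+ N.-1).
by rewrite -exprSr -exprS prednK.
Qed.

Lemma exprz_redmod (e : int) : z ^ e = z ^+ redmod N e.
Proof.
rewrite {1}(divz_eq e N) exprzDr ?root_of_unity_unit // -redmodE //.
rewrite -exprz_exp exprzAC; change (z ^ N%:Z) with (z ^+ N).
by rewrite zN1 exp1rz mul1r.
Qed.

End RootOfUnity.

Lemma prim_exprz_eq1 {R : unitRingType} {N : nat} {z : R} (e : int) :
  N.-primitive_root z -> (z ^ e == 1) = (N%:Z %| e)%Z.
Proof.
move=> prim_z; have N_gt0 := prim_order_gt0 prim_z.
rewrite (exprz_redmod N_gt0 (prim_expr_order prim_z)) -(prim_order_dvd prim_z).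
rewrite /dvdn modn_small ?redmod_lt // -eqz_nat redmodE //.
by apply/eqP/dvdz_mod0P.
Qed.

Lemma sum_expr_eq0 {R : numDomainType} {N : nat} {w : R} : (0 < N)%N ->
  \sum_(t < N) w ^+ t = 0 <-> w ^+ N = 1 /\ w != 1.
Proof.
move=> N_gt0; split=> [sum0 | [wN1 w_neq1]].
- split; first by apply/eqP; rewrite -subr_eq0 subrX1 sum0 mulr0.
  apply/eqP => w1; move: sum0; rewrite w1; under eq_bigr do rewrite expr1n.
  by rewrite sumr_const card_ord => /eqP; rewrite pnatr_eq0 gtn_eqF.
- have /esym/eqP := subrX1 w N.
  by rewrite wN1 subrr mulf_eq0 subr_eq0 (negbTE w_neq1) => /eqP.
Qed.

Lemma inj_ord_bij {T : finType} {N : nat} {F : T -> nat} (F_lt : forall x, (F x < N)%N) :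
  #|T| = N -> injective F -> bijective (fun x => Ordinal (F_lt x)).
Proof.
move=> cardT F_inj; apply: inj_card_bij; last by rewrite cardT card_ord.
by move=> x y /(congr1 val) /F_inj.
Qed.

Lemma perm_of_cover (T : eqType) (n : nat) (f g : 'I_n -> T) :
  injective g -> (forall k, exists i, f i = g k) ->
  exists s : {perm 'I_n}, forall k, f (s k) = g k.
Proof.
move=> g_inj cover.
have cover' k : exists i, f i == g k by have [i /eqP] := cover k; exists i.
pose h k := xchoose (cover' k).
have hP k : f (h k) = g k := eqP (xchooseP (cover' k)).
have h_inj : injective h by move=> k1 k2 /(congr1 f); rewrite !hP => /g_inj.
by exists (perm h_inj) => k; rewrite permE.
Qed.

Section Valuation.

Context {p : nat}.
Hypothesis p_pr : prime p.

Lemma padicv_SomeP (k : nat) (m : int) :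
  padicv p m = Some k <-> ((p ^ k)%:Z %| m)%Z /\ ~~ ((p ^ k.+1)%:Z %| m)%Z.
Proof.
rewrite /padicv !dvdzE /=; have [-> | /eqP m_neq0] := eqP.
  by split=> [// | [_]]; rewrite dvdn0.
have m_gt0 : (0 < `|m|)%N by rewrite absz_gt0.
rewrite !pfactor_dvdn //; split=> [[<-] | [le_km lt_mk]]; first by split; lia.
by congr Some; lia.
Qed.

Lemma padicv_dvdz_mul {m : nat} {b d : int} :
  padicv p b = Some m -> ((p ^ m.+1)%:Z %| b * d)%Z -> (p%:Z %| d)%Z.
Proof.
have [-> | d_neq0] := eqVneq d 0; first by rewrite dvdz0.
rewrite /padicv; case: eqP => // /eqP b_neq0 [vb].
have b_gt0 : (0 < `|b|)%N by rewrite absz_gt0.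
have d_gt0 : (0 < `|d|)%N by rewrite absz_gt0.
rewrite !dvdzE abszM /= pfactor_dvdn ?muln_gt0 ?b_gt0 // lognM // vb => le_m_sum.
by rewrite -[p]expn1 pfactor_dvdn //; lia.
Qed.

Lemma dvdz_small_eq0 (d : int) : (p%:Z %| d)%Z -> (`|d| < p)%N -> d = 0.
Proof.
rewrite dvdzE /= => dvd_pd lt_dp; apply/eqP; rewrite -absz_eq0.
by apply: contraLR dvd_pd; rewrite -lt0n => d_gt0; rewrite gtnNdvd.
Qed.

Lemma padic_digits_eq0 {n : nat} {b d : 'I_n -> int} :
  (forall i, padicv p (b i) = Some (n - i.+1)%N) -> (forall i, `|d i| < p)%N ->
  ((p ^ n)%:Z %| \sum_i b i * d i)%Z -> forall i, d i = 0.
Proof.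
move=> vb d_lt dvd_sum.
suff d0 m (i : 'I_n) : (n <= i + m)%N -> d i = 0.
  by move=> i; apply: (d0 n); rewrite leq_addl.
elim: m i => [|m IHm] i le_n_im; first by have := ltn_ord i; lia.
have [/IHm // | lt_im_n] := leqP n (i + m).
have vbi : padicv p (b i) = Some m by rewrite vb; congr Some; lia.
have dvd_others : ((p ^ m.+1)%:Z %| \sum_(j | j != i) b j * d j)%Z.
  apply: rpred_sum => j j_neq_i; case: (ltngtP j i) => [lt_ji | lt_ij | eq_ji].
  - apply/dvdz_mulr/(dvdz_trans _ ((padicv_SomeP _ _).1 (vb j)).1).
    by rewrite dvdzE /= dvdn_exp2l //; lia.
  - by rewrite IHm ?mulr0 ?dvdz0 //; lia.
  - by rewrite (val_inj eq_ji) eqxx in j_neq_i.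
have dvd_all : ((p ^ m.+1)%:Z %| \sum_j b j * d j)%Z.
  by apply: dvdz_trans dvd_sum; rewrite dvdzE /= dvdn_exp2l //; lia.
move: dvd_all; rewrite (bigD1 i) //= => /rpredB /(_ dvd_others); rewrite addrK.
by move=> /(padicv_dvdz_mul vbi) /dvdz_small_eq0; apply.
Qed.

End Valuation.

Section DigitSum.

Context {p n : nat} {a : 'I_n -> int}.

Local Notation rb := (fun x : {ffun 'I_n -> 'I_p} => redmod (p ^ n) (bprime p a x)).

Lemma card_digits : #|{ffun 'I_n -> 'I_p}| = (p ^ n)%N.
Proof. by rewrite card_ffun !card_ord. Qed.

Lemma sum_exprz_bprime (R : comUnitRingType) (z : R) : z \is a GRing.unit ->
  \sum_x z ^ bprime p a x = \prod_(i < n) \sum_(t < p) (z ^ a i) ^+ t.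
Proof.
move=> z_unit; rewrite bigA_distr_bigA /=; apply: eq_bigr => x _.
rewrite /bprime (big_morph _ (exprzDr z_unit) (expr0z z)).
by apply: eq_bigr => i _; rewrite -exprz_exp.
Qed.

Lemma sum_exprz_bprime_eq0 {R : numDomainType} {z : R} :
  (0 < p)%N -> z ^+ (p ^ n) = 1 -> z != 1 -> injective rb ->
  \sum_x z ^ bprime p a x = 0.
Proof.
move=> p_gt0 zN1 z_neq1 rb_inj; have N_gt0 : (0 < p ^ n)%N by rewrite expn_gt0 p_gt0.
under eq_bigr do rewrite (exprz_redmod N_gt0 zN1).
have rb_lt x : (rb x < p ^ n)%N by apply: redmod_lt.
transitivity (\sum_(y < p ^ n) z ^+ y); last by apply/(sum_expr_eq0 N_gt0).
by rewrite (reindex _ (onW_bij _ (inj_ord_bij rb_lt card_digits rb_inj))).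
Qed.

Hypothesis p_pr : prime p.

Lemma padicv_of_bprime_inj (k : nat) : (k < n)%N -> injective rb ->
  exists i, padicv p (a i) = Some k.
Proof.
move=> lt_kn rb_inj; have p_gt0 := prime_gt0 p_pr.
have [z prim_z] : {z : algC | (p ^ k.+1).-primitive_root z}.
  by apply: C_prim_root_exists; rewrite expn_gt0 p_gt0.
have zN1 : z ^+ (p ^ n) = 1.
  by apply/eqP; rewrite -(prim_order_dvd prim_z) dvdn_exp2l.
have z_neq1 : z != 1.
  by rewrite -[z]expr1 -(prim_order_dvd prim_z) dvdn1 -(expn0 p) eqn_exp2l ?prime_gt1.
have z_unit := root_of_unity_unit (prim_order_gt0 prim_z) (prim_expr_order prim_z).
have := sum_exprz_bprime_eq0 p_gt0 zN1 z_neq1 rb_inj.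
rewrite sum_exprz_bprime // => /eqP /prodf_eq0 [i _ /eqP /(sum_expr_eq0 p_gt0)].
move=> [wp1 w_neq1]; exists i; apply/padicv_SomeP => //; split.
- have : z ^ (a i * p%:Z) == 1 by rewrite -exprz_exp; apply/eqP; exact: wp1.
  by rewrite (prim_exprz_eq1 _ prim_z) expnSr PoszM dvdz_mul2r // eqz_nat -lt0n.
- by rewrite -(prim_exprz_eq1 _ prim_z).
Qed.

Lemma bprime_inj {s : {perm 'I_n}} :
  (forall i, padicv p (a (s i)) = Some (n - i.+1)%N) -> injective rb.
Proof.
move=> va x y /= rxy; have N_gt0 : (0 < p ^ n)%N by rewrite expn_gt0 prime_gt0.
pose d i := (x (s i) : nat)%:Z - (y (s i) : nat)%:Z.
have dvd_sum : ((p ^ n)%:Z %| \sum_i a (s i) * d i)%Z.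
  have -> : \sum_i a (s i) * d i = bprime p a x - bprime p a y.
    rewrite /bprime -sumrB [RHS](reindex_inj (@perm_inj _ s)) /=.
    by apply: eq_bigr => i _; rewrite mulrBr.
  by rewrite -eqz_mod_dvd -!redmodE // rxy.
have d_lt i : (`|d i| < p)%N.
  by rewrite /d; have := ltn_ord (x (s i)); have := ltn_ord (y (s i)); lia.
have d0 := padic_digits_eq0 p_pr va d_lt dvd_sum.
apply/ffunP => j; rewrite -(permKV s j); apply/val_inj/eqP.
by rewrite -eqz_nat -subr_eq0 -/(d _) d0.
Qed.

End DigitSum.

Theorem propositionA2 (p n : nat) (a : 'I_n -> int) :
  prime p -> (0 < n)%N ->
  ( [/\ (forall x, redmod (p ^ n) (bprime p a x) < p ^ n)%N,
        injective (fun x : {ffun 'I_n -> 'I_p} => redmod (p ^ n) (bprime p a x))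
      & (forall y : nat, (y < p ^ n)%N ->
           exists x : {ffun 'I_n -> 'I_p}, redmod (p ^ n) (bprime p a x) = y)]
    <->
    exists s : {perm 'I_n}, forall i : 'I_n, padicv p (a (s i)) = Some (n - i.+1)%N ).
Proof.
(* The argument also covers [n = 0]. *)
move=> p_pr _; have N_gt0 : (0 < p ^ n)%N by rewrite expn_gt0 prime_gt0.
split=> [[_ rb_inj _] | [s va]].
- apply: (@perm_of_cover _ _ (padicv p \o a) (fun k => Some (n - k.+1)%N)).
    move=> k1 k2 [] eq_sub; apply/val_inj => /=.
    by have := ltn_ord k1; have := ltn_ord k2; lia.
  by move=> k; apply: padicv_of_bprime_inj; rewrite ?subnSK //; lia.
- have rb_inj := bprime_inj p_pr va; have rb_lt x := redmod_lt N_gt0 (bprime p a x).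
  split=> // y lt_yN; have [g _ gK] := inj_ord_bij rb_lt card_digits rb_inj.
  by exists (g (Ordinal lt_yN)); have /(congr1 val) := gK (Ordinal lt_yN).
Qed.
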